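(* Let $G$ be a finite abstract simplicial complex with connection matrix $L$ and $g=L^{-1}$. Then for every $x\in G$, $g(x,x)=\chi(W^+(x))=1-\chi(S(x))$.
   Context: A finite abstract simplicial complex $G$ is a finite set of non-empty finite sets closed under taking non-empty subsets; $\omega(y)=(-1)^{|y|-1}$. The connection matrix $L$ has $L(x,y)=1$ if $x\cap y\neq\emptyset$ and $0$ otherwise. The star is $W^+(x)=\{y\in G: x\subseteq y\}$ and $\chi(W^+(x))=\sum_{y\in W^+(x)}\omega(y)$. The graph $G_1$ has vertex set $G$ with $x\neq y$ adjacent iff one contains the other; $S(x)=\{y\in G: y\subsetneq x \text{ or } x\subsetneq y\}$ and $\chi(S(x))$ is the Euler characteristic of the clique complex of the subgraph of $G_1$ induced on $S(x)$. *)

From mathcomp Require Import all_boot all_order all_algebra.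
Set Implicit Arguments. Unset Strict Implicit. Unset Printing Implicit Defensive.
Import Order.TTheory GRing.Theory Num.Theory.
Local Open Scope ring_scope.

Section Defs.
Variable V : finType.

Definition is_complex (G : {set {set V}}) : Prop :=
  (forall x, x \in G -> x != set0) /\
  (forall x y, x \in G -> y != set0 -> y \subset x -> y \in G).

Definition omega (y : {set V}) : rat := (-1) ^+ (#|y|.-1).

Definition chi (A : {set {set V}}) : rat := \sum_(y in A) omega y.

Definition conn (G : {set {set V}}) : 'M[rat]_#|G| :=
  \matrix_(i, j) (if (enum_val i :&: enum_val j) != set0 then 1 else 0).

Definition star (G : {set {set V}}) (x : {set V}) : {set {set V}} :=
  [set y in G | x \subset y].

Definition Sx (G : {set {set V}}) (x : {set V}) : {set {set V}} :=
  [set y in G | (y \proper x) || (x \proper y)].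

(* Clique complex of the subgraph of G_1 induced on A: the non-empty sets of
   pairwise adjacent (i.e. comparable under inclusion) elements of A. *)
Definition clique_complex (A : {set {set V}}) : {set {set {set V}}} :=
  [set C : {set {set V}} | [&& C \subset A, C != set0 &
     [forall y in C, forall z in C, (y != z) ==> ((y \subset z) || (z \subset y))]]].

Definition chi_graph (A : {set {set V}}) : rat :=
  \sum_(C in clique_complex A) (-1) ^+ (#|C|.-1).

End Defs.

(* Write omega = - sg with sg x = (-1)^|x|, the Moebius function of the
   Boolean lattice.  The matrix g(x,z) = omega(x) omega(z) chi(W+(x) :&: W+(z))
   inverts L: summing over y first, the sum of omega(y) over the faces y of w
   meeting x is [w \subset x], and the sum of omega(w) over z \subset w \subset x
   is [z = x] omega(x).  Its diagonal is chi(W+(x)).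
   For the second identity, 1 - chi(S(x)) is the signed count of the chains of
   S(x).  Every proper face of x lies below every proper coface, so S(x) is a
   join of posets and the count is multiplicative; by Moebius inversion the
   two factors are omega(x) (the boundary sphere of x) and omega(x) chi(W+(x)). *)

From mathcomp Require Import all_boot all_order all_algebra.
From mathcomp Require Import ring lra.
Set Implicit Arguments.
Unset Strict Implicit.
Unset Printing Implicit Defensive.
Import GRing.Theory Num.Theory.
Local Open Scope ring_scope.

Section SignSums.
Variable V : finType.
Implicit Types (d : V) (lo u w x y z : {set V}).

Definition sg x : rat := (-1) ^+ #|x|.

Lemma sg_sqr x : sg x * sg x = 1.
Proof. by rewrite /sg -exprD -signr_odd oddD addbb. Qed.

Lemma omega_sg x : x != set0 -> omega x = - sg x.
Proof.
rewrite -card_gt0 /omega /sg => x_gt0.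
by rewrite -{2}(prednK x_gt0) exprS mulN1r opprK.
Qed.

Lemma omega_sqr x : omega x * omega x = 1.
Proof. by rewrite /omega -exprD -signr_odd addnn odd_double. Qed.

Definition toggle d x := if d \in x then x :\ d else d |: x.

Lemma toggleK d : involutive (toggle d).
Proof.
move=> x; rewrite {2}/toggle; case: ifP => dx.
  by rewrite /toggle setD11 setD1K.
by rewrite /toggle setU11 setU1K ?dx.
Qed.

Lemma sg_toggle d x : sg (toggle d x) = - sg x.
Proof.
rewrite /sg /toggle; case: ifP => dx.
  by rewrite -[in RHS](setD1K dx) cardsU1 setD11 exprS mulN1r opprK.
by rewrite cardsU1 dx exprS mulN1r.
Qed.

(* [toggle d], for any [d] in [u :\: lo], is a sign-reversing involution. *)
Lemma sum_sg_interval lo u :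
  \sum_(y : {set V} | (lo \subset y) && (y \subset u)) sg y = (lo == u)%:R * sg u.
Proof.
have [<-|neq_lou] := eqVneq lo u.
  by rewrite mul1r (big_pred1 lo) // => y; rewrite /= eq_sym eqEsubset.
rewrite mul0r; have [sub_lou|not_sub] := boolP (lo \subset u); last first.
  by rewrite big1 // => y /andP[/subset_trans h /h]; rewrite (negbTE not_sub).
have /properP[_ [d du dNlo]] : lo \proper u by rewrite properEneq neq_lou.
have toggle_interval y : (lo \subset toggle d y) && (toggle d y \subset u) =
                         (lo \subset y) && (y \subset u).
  rewrite /toggle; case: ifP => _.
    by rewrite subsetD1 dNlo andbT subDset (setUidPr _) ?sub1set.
  have lo_d : lo :\: [set d] = lo by apply/setDidPl; rewrite disjoint_sym disjoints1.
  by rewrite -subDset lo_d subUset sub1set du.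
set S := \sum_(y | _) _; have S_opp : S = - S.
  rewrite {1}/S (reindex_inj (inv_inj (toggleK d))) /= -sumrN.
  by apply: eq_big => y; rewrite ?toggle_interval ?sg_toggle.
lra.
Qed.

Lemma sum_sg_proper_interval lo u : lo \proper u ->
  \sum_(y : {set V} | (lo \proper y) && (y \subset u)) sg y = - sg lo.
Proof.
move=> /andP[sub_lou not_sub_ul].
have neq_lou : lo != u by apply: contraNneq not_sub_ul => ->.
have := sum_sg_interval lo u; rewrite (negbTE neq_lou) mul0r (bigD1 lo) /=; last first.
  by rewrite subxx.
move=> /eqP; rewrite addrC addr_eq0 => /eqP <-; apply: eq_bigl => y.
by rewrite properEneq eq_sym -andbA andbC.
Qed.

Lemma sum_sg_subset u : \sum_(y : {set V} | y \subset u) sg y = (u == set0)%:R.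
Proof.
rewrite (eq_bigl (fun y => (set0 \subset y) && (y \subset u))) => [|y]; last first.
  by rewrite sub0set.
by rewrite sum_sg_interval eq_sym; case: eqP => [->|_]; rewrite ?mul0r // /sg cards0 mulr1.
Qed.
End SignSums.

Section Chains.
Variable V : finType.
Implicit Types (m y z : {set V}) (A B C D : {set {set V}}).

Definition chain C :=
  [forall y in C, forall z in C, (y != z) ==> ((y \subset z) || (z \subset y))].

(* Minus the reduced Euler characteristic of the order complex of [A]. *)
Definition chain_sum A : rat :=
  \sum_(C : {set {set V}} | (C \subset A) && chain C) (-1) ^+ #|C|.

Definition above A m := [set y in A | m \proper y].

Lemma chainP C : reflect {in C &, forall y z, y != z ->
  (y \subset z) || (z \subset y)} (chain C).
Proof.
apply: (iffP forall_inP) => [chC y z yC zC | chC y yC].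
  by move/forall_inP: (chC y yC) => /(_ z zC) /implyP.
by apply/forall_inP => z zC; apply/implyP; apply: chC.
Qed.

Lemma chain0 : chain set0.
Proof. by apply/chainP => y; rewrite inE. Qed.

Lemma chain_sub C D : C \subset D -> chain D -> chain C.
Proof. by move=> /subsetP sCD /chainP chD; apply/chainP => y z /sCD yD /sCD; apply: chD. Qed.

Lemma chain_setU1 m C : {in C, forall y, m \subset y} -> chain (m |: C) = chain C.
Proof.
move=> m_le; apply/idP/idP; first by apply: chain_sub; apply: subsetUr.
move/chainP=> chC; apply/chainP => y z /setU1P[->|yC] /setU1P[->|zC].
- by rewrite eqxx.
- by rewrite m_le.
- by rewrite m_le ?orbT.
- exact: chC.
Qed.

Definition least m C := (m \in C) && [forall y in C, m \subset y].

Lemma chain_least C : C != set0 -> chain C -> exists m0, forall m, least m C = (m == m0).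
Proof.
move=> /set0Pn[y0 y0C] chC.
have [m0 m0C m0_min] := arg_minnP (fun y : {set V} => #|y|) y0C.
have m0_le y : y \in C -> m0 \subset y.
  move=> yC; have [<-//|neq] := eqVneq m0 y.
  case/orP: (chainP _ chC m0 y m0C yC neq) => // sub_y.
  by rewrite -(eqP (_ : y == m0)) // eqEcard sub_y m0_min.
exists m0 => m; apply/andP/eqP => [[mC /forall_inP m_le] | ->].
  by apply/eqP; rewrite eqEsubset m_le // m0_le.
by split=> //; apply/forall_inP.
Qed.

Lemma sum_chains_least A m : m \in A ->
  \sum_(C : {set {set V}} | (C \subset A) && chain C && least m C) (-1) ^+ #|C|
    = - chain_sum (above A m).
Proof.
move=> mA; rewrite /chain_sum -sumrN.
rewrite (reindex_onto (fun C' => m |: C') (fun C => C :\ m)) /=; last first.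
  by move=> C /andP[_ /andP[mC _]]; rewrite setD1K.
apply: eq_big => C'; last first.
  move=> /andP[_ /eqP eC']; have mNC' : m \notin C' by rewrite -eC' setD11.
  by rewrite cardsU1 mNC' exprS mulN1r.
have [/subsetP sub_above | not_sub] := boolP (C' \subset above A m).
  have m_lt y : y \in C' -> m \proper y by move/sub_above; rewrite inE => /andP[].
  have mNC' : m \notin C' by apply/negP => /m_lt; rewrite properxx.
  have sub_A : m |: C' \subset A.
    by rewrite subUset sub1set mA; apply/subsetP => y /sub_above; rewrite inE => /andP[].
  have least_m : least m (m |: C').
    by rewrite /least setU11; apply/forall_inP => y /setU1P[->//|/m_lt/proper_sub].
  by rewrite setU1K // eqxx sub_A least_m chain_setU1 ?andbT // => y /m_lt /proper_sub.
apply/negbTE/negP => /andP[/andP[/andP[sub_A _] /andP[_ /forall_inP m_le]] /eqP eC'].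
have mNC' : m \notin C' by rewrite -eC' setD11.
case/negP: not_sub; apply/subsetP => y yC'; have yU : y \in m |: C' by rewrite setU1r.
rewrite inE (subsetP sub_A _ yU) properEneq m_le // andbT.
by apply: contraNneq mNC' => ->.
Qed.

Lemma chain_sum_rec A : chain_sum A = 1 - \sum_(m in A) chain_sum (above A m).
Proof.
rewrite /chain_sum (bigD1 set0) /= ?sub0set ?chain0 // cards0 expr0; congr (_ + _).
rewrite -sumrN; transitivity (\sum_(m in A) \sum_(C : {set {set V}} |
    (C \subset A) && chain C && least m C) (-1) ^+ #|C| : rat); last first.
  by apply: eq_bigr => m mA; rewrite sum_chains_least.
transitivity (\sum_(C : {set {set V}} | (C \subset A) && chain C && (C != set0))
    \sum_(m : {set V} | least m C) (-1) ^+ #|C| : rat).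
  apply: eq_bigr => C /andP[/andP[_ chC] C_neq0].
  by have [m0 least_m0] := chain_least C_neq0 chC; rewrite (big_pred1 m0).
rewrite (exchange_big_dep (mem A)) /= => [|C m /andP[/andP[/subsetP sCA _] _] /andP[/sCA //]].
apply: eq_bigr => m _; apply: eq_bigl => C.
case: (boolP (least m C)) => [/andP[mC _]|]; rewrite ?andbF ?andbT //.
have -> : C != set0 by apply/set0Pn; exists m.
by rewrite andbT.
Qed.

Lemma above_above A m y : y \in above A m -> above (above A m) y = above A y.
Proof.
rewrite inE => /andP[_ lt_my]; apply/setP => z; rewrite !inE.
by case: (boolP (y \proper z)) => [/(proper_trans lt_my)->|]; rewrite ?andbT ?andbF.
Qed.

Lemma above_proper A m : m \in A -> above A m \proper A.
Proof.
move=> mA; apply/properP; split; first by apply/subsetP => y; rewrite inE => /andP[].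
by exists m; rewrite // inE properxx andbF.
Qed.

(* Every chain of [A :|: B] splits uniquely into a chain of [A] below a chain
   of [B]. *)
Lemma chain_sum_join A B : {in A & B, forall a b : {set V}, a \proper b} ->
  chain_sum (A :|: B) = chain_sum A * chain_sum B.
Proof.
have [n] := ubnP #|A|; elim: n A => // n IH A lt_An A_lt_B.
have not_lt_BA : {in B & A, forall b a : {set V}, ~~ (b \proper a)}.
  by move=> b a bB aA; apply/negP => /(proper_trans (A_lt_B a b aA bB)); rewrite properxx.
have disjAB : [disjoint A & B].
  by apply/pred0P => y /=; apply/negP => /andP[yA yB]; have := A_lt_B y y yA yB; rewrite properxx.
have above_A m : m \in A -> above (A :|: B) m = above A m :|: B.
  move=> mA; apply/setP => y; rewrite !inE.
  by case: (boolP (y \in B)) => yB; rewrite ?orbF // A_lt_B ?orbT.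
have above_B m : m \in B -> above (A :|: B) m = above B m.
  move=> mB; apply/setP => y; rewrite !inE.
  by case: (boolP (y \in A)) => yA //; rewrite (negbTE (not_lt_BA _ _ mB yA)) !andbF.
rewrite chain_sum_rec (eq_bigl [predU A & B]) => [|y]; last exact: in_setU.
rewrite bigU //=.
rewrite (eq_bigr (fun m => chain_sum (above A m) * chain_sum B)) => [|m mA]; last first.
  rewrite above_A // IH //; first exact: leq_trans (proper_card (above_proper mA)) _.
  by move=> a b; rewrite inE => /andP[aA _]; apply: A_lt_B.
rewrite (eq_bigr (fun m => chain_sum (above B m))) => [|m mB]; last by rewrite above_B.
rewrite -mulr_suml [chain_sum A]chain_sum_rec.
have := chain_sum_rec B; set cB := chain_sum B => ->; ring.
Qed.

(* Moebius inversion: by [chain_sum_rec], both sides satisfy the same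
   recursion over the elements above [m]. *)
Lemma chain_sum_above D m :
    (forall z y, z \in D -> y != set0 -> y \subset z -> y \in D) -> m \in D ->
  chain_sum (above D m) = sg m * \sum_(z in D | m \subset z) sg z.
Proof.
move=> D_closed; have [n] := ubnP #|above D m|; elim: n m => // n IH m; rewrite ltnS => le_mn mD.
rewrite chain_sum_rec.
rewrite (eq_bigr (fun y => \sum_(z in D | y \subset z) sg y * sg z)) => [|y ym]; last first.
  have [yD lt_my] : y \in D /\ m \proper y by move: ym; rewrite inE => /andP[].
  rewrite above_above // IH // ?big_distrr //; apply: leq_trans le_mn.
  apply: proper_card; apply/properP; split; last by exists y; rewrite // inE properxx andbF.
  by apply/subsetP => z; rewrite !inE => /andP[-> /(proper_trans lt_my)].
rewrite (exchange_big_dep (fun z => (z \in D) && (m \proper z))) /=; last first.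
  by move=> y z; rewrite inE => /andP[_ lt_my] /andP[-> /(proper_sub_trans lt_my)].
rewrite [in RHS](bigD1 m) /= ?mD ?subxx // mulrDr sg_sqr -sumrN mulr_sumr.
congr (_ + _).
apply: eq_big => [z | z /andP[zD lt_mz]]; first by rewrite properEneq eq_sym andbA andbAC.
rewrite -mulr_suml -[sg m]opprK -(sum_sg_proper_interval lt_mz) mulNr; congr (- (_ * _)).
apply: eq_bigl => y; rewrite inE zD /= -andbA andb_idl // => /andP[lt_my yz].
by apply: D_closed zD _ yz; rewrite -proper0 (sub_proper_trans (sub0set m) lt_my).
Qed.

Lemma chain_sum_chi_graph A : chain_sum A = 1 - chi_graph A.
Proof.
rewrite /chain_sum /chi_graph (bigD1 set0) /= ?sub0set ?chain0 // cards0 expr0 -sumrN.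
congr (_ + _); apply: eq_big => [C | C /andP[_ C_neq0]]; first by rewrite inE andbAC -andbA.
by rewrite -card_gt0 in C_neq0; rewrite -{1}(prednK C_neq0) exprS mulN1r.
Qed.
End Chains.

Section Complex.
Variables (V : finType) (G : {set {set V}}).
Hypothesis complexG : is_complex G.
Implicit Types (x y z w : {set V}).

Lemma complex_neq0 x : x \in G -> x != set0.
Proof. exact: complexG.1. Qed.

Lemma chain_sum_cofaces x : x \in G -> chain_sum (above G x) = omega x * chi (star G x).
Proof.
move=> xG; rewrite chain_sum_above //; last exact: complexG.2.
rewrite omega_sg ?complex_neq0 // mulNr -mulrN -sumrN; congr (_ * _).
apply: eq_big => [y | y /andP[yG _]]; first by rewrite inE.
by rewrite omega_sg ?complex_neq0 ?opprK.
Qed.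

Lemma chain_sum_faces x : x \in G -> chain_sum [set y in G | y \proper x] = omega x.
Proof.
move=> xG; have x_neq0 := complex_neq0 xG.
have -> : [set y in G | y \proper x] = above [set y : {set V} | y \proper x] set0.
  apply/setP => y; rewrite !inE proper0 andbC.
  case: (boolP (y \proper x)) => //= lt_yx; apply/idP/idP; first exact: complex_neq0.
  by move=> y_neq0; apply: complexG.2 xG y_neq0 (proper_sub lt_yx).
rewrite chain_sum_above ?inE ?proper0 //; last first.
  by move=> z y; rewrite !inE => lt_zx _ /sub_proper_trans; apply.
rewrite /sg cards0 mul1r -/(sg x) omega_sg //.
have := sum_sg_subset x; rewrite (negbTE x_neq0) (bigD1 x) //= => /eqP.
rewrite addrC addr_eq0 => /eqP <-; apply: eq_bigl => y.
by rewrite !inE sub0set andbT properEneq andbC.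
Qed.

Lemma Sx_split x : Sx G x = [set y in G | y \proper x] :|: above G x.
Proof. by apply/setP => y; rewrite !inE andb_orr. Qed.

Lemma chi_star_Sx x : x \in G -> chi (star G x) = 1 - chi_graph (Sx G x).
Proof.
move=> xG; rewrite -chain_sum_chi_graph Sx_split chain_sum_join; last first.
  by move=> a b; rewrite !inE => /andP[_ lt_ax] /andP[_ /(proper_trans lt_ax)].
by rewrite chain_sum_cofaces // (chain_sum_faces xG) mulrA omega_sqr mul1r.
Qed.

Lemma sum_meet_omega x w : w \in G ->
  \sum_(y in G | y \subset w) (if x :&: y != set0 then 1 else 0) * omega y = (w \subset x)%:R.
Proof.
move=> wG; have meet_neq0 y : x :&: y != set0 -> y != set0.
  by apply: contraNneq => ->; rewrite setI0.
transitivity (- \sum_(y : {set V} | (y \subset w) && (x :&: y != set0)) sg y).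
  rewrite (bigID (fun y => x :&: y != set0)) /= [X in _ + X]big1 => [|y]; last first.
    by move=> /andP[_ /negbTE->]; rewrite mul0r.
  rewrite addr0 -sumrN; apply: eq_big => [y | y /andP[_ xy_neq0]]; last first.
    by rewrite xy_neq0 mul1r (omega_sg (meet_neq0 _ xy_neq0)).
  case: (boolP (x :&: y != set0)) => xy_neq0; rewrite ?andbF // !andbT andb_idl // => yw.
  exact: complexG.2 wG (meet_neq0 _ xy_neq0) yw.
have := sum_sg_subset w; rewrite (negbTE (complex_neq0 wG)) (bigID (fun y => x :&: y != set0)) /=.
move=> /eqP; rewrite addr_eq0 => /eqP ->; rewrite opprK -setD_eq0 -sum_sg_subset.
by apply: eq_bigl => y; rewrite subsetD negbK setI_eq0 disjoint_sym.
Qed.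

Lemma sum_omega_interval z x : z \in G -> x \in G ->
  \sum_(w in G | (z \subset w) && (w \subset x)) omega w = (z == x)%:R * omega x.
Proof.
move=> zG xG; have neq0 w : z \subset w -> w != set0.
  by move=> zw; apply: contraNneq (complex_neq0 zG) => w0; rewrite -subset0 -w0.
rewrite omega_sg ?complex_neq0 // mulrN -sum_sg_interval -sumrN.
apply: eq_big => [w | w /andP[_ /andP[/neq0 w_neq0 _]]]; last by rewrite omega_sg.
rewrite andb_idl // => /andP[zw wx].
exact: complexG.2 xG (neq0 w zw) wx.
Qed.

Definition conn_inv : 'M[rat]_#|G| := \matrix_(i, j)
  (omega (enum_val i) * omega (enum_val j) *
   \sum_(w in G | (enum_val i \subset w) && (enum_val j \subset w)) omega w).

Lemma conn_mul_inv : conn G *m conn_inv = 1%:M.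
Proof.
apply/matrixP => i k; rewrite !mxE; set x := enum_val i; set z := enum_val k.
have [xG zG] : x \in G /\ z \in G by split; apply: enum_valP.
under eq_bigr => j _ do rewrite !mxE.
rewrite -(big_enum_val (fun y : {set V} => (if x :&: y != set0 then 1 else 0) *
  (omega y * omega z * \sum_(w in G | (y \subset w) && (z \subset w)) omega w))) /=.
transitivity (\sum_(w in G | z \subset w) omega z * omega w * (w \subset x)%:R).
  under eq_bigr => y _ do rewrite !mulr_sumr.
  rewrite (exchange_big_dep (fun w => (w \in G) && (z \subset w))) /=; last first.
    by move=> y w _ /andP[-> /andP[_ ->]].
  apply: eq_bigr => w /andP[wG zw]; rewrite -(sum_meet_omega x wG) mulr_sumr.
  apply: eq_big => [y | y _]; first by rewrite wG zw !andbT.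
  by set c := (if _ then _ else _); ring.
rewrite (eq_bigr (fun w => omega z * (if w \subset x then omega w else 0))) => [|w _]; last first.
  by case: (w \subset x); rewrite ?mulr1 ?mulr0.
rewrite -mulr_sumr -big_mkcondr; under eq_bigl => w do rewrite -andbA.
rewrite sum_omega_interval // -(inj_eq enum_val_inj) -/x -/z eq_sym.
by case: eqVneq => [->|_]; rewrite ?mul0r ?mulr0 // mul1r omega_sqr.
Qed.

Lemma invmx_conn : invmx (conn G) = conn_inv.
Proof.
have conn_unit : conn G \in unitmx by case/mulmx1_unit: conn_mul_inv.
by rewrite -[invmx _]mulmx1 -conn_mul_inv mulmxA mulVmx ?mul1mx.
Qed.
End Complex.

Theorem mainTheorem10 (V : finType) (G : {set {set V}}) :
  is_complex G ->
  forall i : 'I_#|G|,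
    let x := enum_val i in
    (invmx (conn G)) i i = chi (star G x) /\
    chi (star G x) = 1 - chi_graph (Sx G x).
Proof.
move=> complexG i x; have xG : x \in G by apply: enum_valP.
split; last exact: chi_star_Sx.
rewrite invmx_conn // mxE -/x omega_sqr mul1r.
by apply: eq_bigl => w; rewrite inE andbb.
Qed.
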